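(* In an instance of the Profile Matching Problem (defined in the context), if the distances $d(x,y)$ of a given participant $x$ to all members $y$ of the opposite sex are pairwise distinct, then $x$ has a unique stable partner.
   Context: Profile Matching Problem: a set $\mathcal{M}$ of $n$ men and a set $\mathcal{W}$ of $n$ women; each participant $x$ has a profile $\mathbf{a}(x)\in Q_k=\{0,1\}^k$. The distance $d$ on $Q_k$ is either the Hamming distance $d_h(\mathbf{a},\mathbf{a}')=\sum_{i=1}^k\mathbf{1}(a_i\ne a_i')$ or the Weighted Hamming distance $d_w(\mathbf{a},\mathbf{a}')=\sum_{i=1}^k2^{-i}\mathbf{1}(a_i\ne a_i')$; $d(x,y)=d(\mathbf{a}(x),\mathbf{a}(y))$. Each participant $x$ has a tie-breaking list $T_x$ (a strict order on the opposite sex); the strict preference list of $x$ ranks the opposite sex in increasing order of $d(x,\cdot)$, ties broken by $T_x$. Stable matchings are in the sense of Gale and Shapley; $y$ is a stable partner of $x$ if they are matched in some stable matching. *)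

From mathcomp Require Import all_boot all_order all_algebra all_fingroup.
Set Implicit Arguments. Unset Strict Implicit. Unset Printing Implicit Defensive.
Import Order.TTheory GRing.Theory Num.Theory.
Local Open Scope ring_scope.

(* Profiles: elements of Q_k = {0,1}^k, coordinates indexed 0..k-1
   (coordinate i here is coordinate i+1 of the paper). *)
Definition profile (k : nat) := {ffun 'I_k -> bool}.

Inductive dist_kind := Hamming | WeightedHamming.

(* d_h(a,a') = sum_i 1(a_i <> a'_i);  d_w(a,a') = sum_i 2^{-i} 1(a_i <> a'_i)
   (paper index i = our index i+1, hence the weight 2^{-(i+1)}). *)
Definition dist (dk : dist_kind) (k : nat) (a a' : profile k) : rat :=
  match dk with
  | Hamming => \sum_(i < k | a i != a' i) 1
  | WeightedHamming => \sum_(i < k | a i != a' i) (2%:R ^- (i.+1))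
  end.

(* Strict preference of a participant: ranks the opposite sex by increasing
   distance, ties broken by the tie-breaking list T (a strict order given as a
   ranking permutation: T y < T y' means y comes before y' in T).
   [prefers dx T y y'] : the participant strictly prefers y to y', where
   dx y is the distance from the participant to y. *)
Definition prefers (n : nat) (dx : 'I_n -> rat) (T : {perm 'I_n}) (y y' : 'I_n) : bool :=
  (dx y < dx y') || ((dx y == dx y') && (T y < T y')%N).

Definition dMW (dk : dist_kind) (n k : nat) (am aw : 'I_n -> profile k)
  (m w : 'I_n) : rat := dist dk (am m) (aw w).

Definition stable (dk : dist_kind) (n k : nat) (am aw : 'I_n -> profile k)
  (Tm Tw : 'I_n -> {perm 'I_n}) (mu : {perm 'I_n}) : Prop :=
  forall m w : 'I_n,
    ~~ (prefers (fun w' => dMW dk am aw m w') (Tm m) w (mu m)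
        && prefers (fun m' => dMW dk am aw m' w) (Tw w) m ((mu^-1)%g w)).

Definition stable_partner (dk : dist_kind) (n k : nat) (am aw : 'I_n -> profile k)
  (Tm Tw : 'I_n -> {perm 'I_n}) (m w : 'I_n) : Prop :=
  exists mu : {perm 'I_n}, stable dk am aw Tm Tw mu /\ mu m = w.

From mathcomp Require Import all_boot all_order all_algebra all_fingroup.
Set Implicit Arguments. Unset Strict Implicit. Unset Printing Implicit Defensive.
Import Order.TTheory GRing.Theory Num.Theory.
Local Open Scope ring_scope.

(* Existence is Gale-Shapley, obtained from a Tarski fixed point X of the
   monotone map on sets of pairs "discard the pairs that some man beats inside
   X, then discard the pairs that some woman beats among the survivors": the
   pairs of X that no man beats inside X form a perfect stable matching.
   Uniqueness uses that both sides rank by the same distance.  If a man prefers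
   his partner in the stable matching mu1 to his partner in the stable matching
   mu2, then m |-> mu2^-1 (mu1 m) maps the set A of such men injectively into
   itself, and comparing sum_A d(m, mu1 m) <= sum_A d(m, mu2 m)
   = sum_A d(mu2^-1 (mu1 m), mu1 m) <= sum_A d(m, mu1 m) shows that every man
   of A is equidistant from his two partners. *)

Lemma exists_minimal (T : finType) (r : rel T) (P : pred T) x0 :
  irreflexive r -> transitive r -> P x0 ->
  exists2 x, P x & forall y, P y -> ~~ r y x.
Proof.
move=> r_irr r_trans Px0.
pose below x := [set y | P y & r y x].
case: (arg_minnP (fun x => #|below x|) Px0) => x Px x_min.
exists x => // y Py; apply/negP => ryx.
have : below y \proper below x.
  apply/properP; split; last by exists y; rewrite !inE ?Py ?ryx ?r_irr.
  by apply/subsetP => z; rewrite !inE => /andP[-> rzy]; exact: r_trans ryx.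
by move/proper_card; rewrite ltnNge x_min.
Qed.

Lemma ler_sum_eq (I : finType) (R : numDomainType) (P : pred I) (F G : I -> R) :
  (forall i, P i -> F i <= G i) -> \sum_(i | P i) G i <= \sum_(i | P i) F i ->
  forall i, P i -> F i = G i.
Proof.
move=> leFG leGF i Pi; apply/eqP; rewrite eq_sym -subr_eq0; apply/eqP.
have diff_ge0 j : P j -> 0 <= G j - F j by move=> Pj; rewrite subr_ge0 leFG.
apply: (psumr_eq0P diff_ge0) Pi.
by apply/eqP; rewrite sumrB subr_eq0 eq_le leGF ler_sum.
Qed.

Lemma cover_snd_cover_fst (T : finType) (S : {set T * T}) :
  {in S &, injective fst} -> {in S &, injective snd} ->
  (forall w, exists m, (m, w) \in S) -> forall m, exists w, (m, w) \in S.
Proof.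
move=> fst_inj snd_inj snd_onto m.
have snd_S : [set e.2 | e in S] = setT.
  apply/setP => w; have [m' m'wS] := snd_onto w.
  by rewrite inE; apply/imsetP; exists (m', w).
have fst_S : [set e.1 | e in S] = setT.
  apply/eqP; rewrite eqEcard subsetT cardsT card_in_imset //=.
  by rewrite -(card_in_imset snd_inj) snd_S cardsT.
have : m \in [set e.1 | e in S] by rewrite fst_S inE.
by case/imsetP => [[m' w] mwS /= ->]; exists w.
Qed.

Definition stable_matching (T : finType) (pm pw : T -> rel T) (mu : {perm T}) :=
  forall m w, ~~ (pm m w (mu m) && pw w m ((mu^-1)%g w)).

Lemma stable_matching_inv (T : finType) (pm pw : T -> rel T) (mu : {perm T}) :
  stable_matching pm pw mu -> stable_matching pw pm (mu^-1)%g.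
Proof. by move=> mu_stable w m; rewrite invgK andbC. Qed.

Section GaleShapley.
Variables (T : finType) (pm pw : T -> rel T).
Hypothesis pm_irr : forall m, irreflexive (pm m).
Hypothesis pw_irr : forall w, irreflexive (pw w).
Hypothesis pm_trans : forall m, transitive (pm m).
Hypothesis pw_trans : forall w, transitive (pw w).
Hypothesis pm_total : forall m w w', w != w' -> pm m w w' || pm m w' w.
Hypothesis pw_total : forall w m m', m != m' -> pw w m m' || pw w m' m.

Definition man_undominated (X : {set T * T}) :=
  [set e | ~~ [exists w, ((e.1, w) \in X) && pm e.1 w e.2]].

Definition woman_undominated (Y : {set T * T}) :=
  [set e | ~~ [exists m, ((m, e.2) \in Y) && pw e.2 m e.1]].

Lemma man_undominated_anti (X X' : {set T * T}) :
  X \subset X' -> man_undominated X' \subset man_undominated X.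
Proof.
move=> /subsetP sXX'; apply/subsetP => e; rewrite !inE; apply: contra.
by case/existsP => w /andP[/sXX' eX' pe]; apply/existsP; exists w; rewrite eX'.
Qed.

Lemma woman_undominated_anti (Y Y' : {set T * T}) :
  Y \subset Y' -> woman_undominated Y' \subset woman_undominated Y.
Proof.
move=> /subsetP sYY'; apply/subsetP => e; rewrite !inE; apply: contra.
by case/existsP => m /andP[/sYY' eY' pe]; apply/existsP; exists m; rewrite eY'.
Qed.

Section FixedPoint.
Variable X : {set T * T}.
Hypothesis X_fixed : woman_undominated (man_undominated X) = X.
Let Y := man_undominated X.
Let S := X :&: Y.

Lemma man_best_in_S m w : (m, w) \in X -> exists w0, (m, w0) \in S.
Proof.
move=> mwX; pose P w' := (m, w') \in X.
have [w0 mw0X w0_best] := exists_minimal (pm_irr m) (@pm_trans m) (mwX : P w).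
exists w0; rewrite inE [_ \in X]mw0X inE negb_exists /=.
by apply/forallP => w'; apply/negP => /andP[/w0_best/negP].
Qed.

Lemma woman_best_in_S m w : (m, w) \in Y -> exists m0, (m0, w) \in S.
Proof.
move=> mwY; pose P m' := (m', w) \in Y.
have [m0 m0wY m0_best] := exists_minimal (pw_irr w) (@pw_trans w) (mwY : P m).
exists m0; rewrite inE [_ \in Y]m0wY andbT -X_fixed inE negb_exists /=.
by apply/forallP => m'; apply/negP => /andP[/m0_best/negP].
Qed.

Lemma Y_undominated m w w' : (m, w) \in X -> (m, w') \in Y -> ~~ pm m w w'.
Proof. by move=> mwX; rewrite inE negb_exists => /forallP/(_ w); rewrite mwX. Qed.

Lemma X_undominated m m' w : (m', w) \in Y -> (m, w) \in X -> ~~ pw w m' m.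
Proof.
by move=> m'wY; rewrite -X_fixed inE negb_exists => /forallP/(_ m'); rewrite m'wY.
Qed.

Lemma S_fst_inj : {in S &, injective fst}.
Proof.
move=> [m w] [m' w'] /setIP[mwX mwY] /setIP[mw'X mw'Y] /= eq_m.
rewrite -{m'}eq_m in mw'X mw'Y *.
case: (eqVneq w w') => [-> // | /(pm_total m)/orP[] pref].
- by have := Y_undominated mwX mw'Y; rewrite pref.
- by have := Y_undominated mw'X mwY; rewrite pref.
Qed.

Lemma S_snd_inj : {in S &, injective snd}.
Proof.
move=> [m w] [m' w'] /setIP[mwX mwY] /setIP[m'wX m'wY] /= eq_w.
rewrite -{w'}eq_w in m'wX m'wY *.
case: (eqVneq m m') => [-> // | /(pw_total w)/orP[] pref].
- by have := X_undominated mwY m'wX; rewrite pref.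
- by have := X_undominated m'wY mwX; rewrite pref.
Qed.

Lemma S_covers_men m : exists w, (m, w) \in S.
Proof.
case: (boolP [exists w, (m, w) \in S]) => [/existsP // | /existsPn m_unmatched].
suff women_matched w : exists m', (m', w) \in S.
  have [w mwS] := cover_snd_cover_fst S_fst_inj S_snd_inj women_matched m.
  by move: (m_unmatched w); rewrite mwS.
have : (m, w) \notin X by apply/negP => /man_best_in_S[w0]; apply/negP.
rewrite -{1}X_fixed inE negbK => /existsP[m' /andP[m'wY _]].
exact: woman_best_in_S m'wY.
Qed.

Lemma S_perm_stable (mu : {perm T}) :
  (forall m, (m, mu m) \in S) -> stable_matching pm pw mu.
Proof.
move=> mu_S m w; apply/negP => /andP[m_pref w_pref].
have /setIP[_ mmuY] := mu_S m.
have /setIP[wX _] : ((mu^-1)%g w, w) \in S by rewrite -{2}(permKV mu w) mu_S.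
have mwY : (m, w) \in Y.
  rewrite inE negb_exists; apply/forallP => w'; apply/negP => /andP[mw'X pref'].
  by have := Y_undominated mw'X mmuY; rewrite (pm_trans pref' m_pref).
by have := X_undominated mwY wX; rewrite w_pref.
Qed.

End FixedPoint.

Lemma stable_matching_exists : exists mu, stable_matching pm pw mu.
Proof.
pose F X := woman_undominated (man_undominated X).
have F_mono : {homo F : X X' / X \subset X'}.
  by move=> X X' sXX'; apply/woman_undominated_anti/man_undominated_anti.
have X_fixed := fixsetK F_mono.
have [f f_S] := fin_all_exists (S_covers_men X_fixed).
have f_inj : injective f.
  move=> m m' eq_f; have /= := S_snd_inj X_fixed (f_S m) (f_S m').
  by rewrite eq_f => /(_ erefl)[].
exists (perm f_inj); apply: (S_perm_stable X_fixed) => m.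
by rewrite permE.
Qed.

End GaleShapley.

Section Uniqueness.
Variables (T : finType) (R : numDomainType) (D : T -> T -> R) (pm pw : T -> rel T).
Hypothesis pm_irr : forall m, irreflexive (pm m).
Hypothesis pm_total : forall m w w', w != w' -> pm m w w' || pm m w' w.
Hypothesis pw_total : forall w m m', m != m' -> pw w m m' || pw w m' m.
Hypothesis pm_le : forall m w w', pm m w w' -> D m w <= D m w'.
Hypothesis pw_le : forall w m m', pw w m m' -> D m w <= D m' w.

Lemma stable_rotation (mu1 mu2 : {perm T}) m :
  stable_matching pm pw mu1 -> stable_matching pm pw mu2 ->
  pm m (mu1 m) (mu2 m) ->
  pw (mu1 m) ((mu2^-1)%g (mu1 m)) m /\
  pm ((mu2^-1)%g (mu1 m)) (mu1 ((mu2^-1)%g (mu1 m))) (mu1 m).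
Proof.
move=> mu1_stable mu2_stable pref.
have w_neq : mu1 m != mu2 m by apply: contraTneq pref => <-; rewrite pm_irr.
have m'_neq : (mu2^-1)%g (mu1 m) != m.
  by apply: contra_neq w_neq => eq_m; rewrite -{2}eq_m permKV.
have w_pref : pw (mu1 m) ((mu2^-1)%g (mu1 m)) m.
  have := mu2_stable m (mu1 m); rewrite pref /= => /negbTE not_pref.
  by have := pw_total (mu1 m) m'_neq; rewrite not_pref orbF.
split=> //.
have := mu1_stable ((mu2^-1)%g (mu1 m)) (mu1 m); rewrite permK w_pref andbT.
move=> /negbTE not_pref; have : mu1 m != mu1 ((mu2^-1)%g (mu1 m)).
  by rewrite (inj_eq perm_inj) eq_sym.
by move=> /(pm_total ((mu2^-1)%g (mu1 m))); rewrite not_pref.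
Qed.

Lemma stable_prefers_dist_eq (mu1 mu2 : {perm T}) x :
  stable_matching pm pw mu1 -> stable_matching pm pw mu2 ->
  pm x (mu1 x) (mu2 x) -> D x (mu1 x) = D x (mu2 x).
Proof.
move=> mu1_stable mu2_stable pref.
pose A := [set m | pm m (mu1 m) (mu2 m)].
pose rot := (mu1 * mu2^-1)%g.
have rotE m : rot m = (mu2^-1)%g (mu1 m) by rewrite permM.
have rot_A : rot @: A = A.
  apply/eqP; rewrite eqEcard card_imset ?leqnn ?andbT; last exact: perm_inj.
  apply/subsetP => _ /imsetP[m + ->]; rewrite !inE rotE permKV.
  by case/(stable_rotation mu1_stable mu2_stable).
have sum_rot : \sum_(m in A) D m (mu2 m) = \sum_(m in A) D (rot m) (mu1 m).
  rewrite -{1}rot_A big_imset /=; last by move=> ? ? _ _; exact: perm_inj.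
  by apply: eq_bigr => m _; rewrite rotE permKV.
have le12 m : m \in A -> D m (mu1 m) <= D m (mu2 m) by rewrite inE => /pm_le.
have le21 : \sum_(m in A) D m (mu2 m) <= \sum_(m in A) D m (mu1 m).
  rewrite sum_rot; apply: ler_sum => m; rewrite inE.
  by case/(stable_rotation mu1_stable mu2_stable) => /pw_le; rewrite rotE.
by apply: (ler_sum_eq le12 le21); rewrite inE.
Qed.

Lemma stable_partner_unique (mu1 mu2 : {perm T}) m :
  stable_matching pm pw mu1 -> stable_matching pm pw mu2 ->
  injective (D m) -> mu1 m = mu2 m.
Proof.
move=> mu1_stable mu2_stable D_inj.
case: (eqVneq (mu1 m) (mu2 m)) => // /(pm_total m)/orP[] pref; apply: D_inj.
- exact: stable_prefers_dist_eq mu1_stable mu2_stable pref.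
- exact/esym/(stable_prefers_dist_eq mu2_stable mu1_stable pref).
Qed.

End Uniqueness.

Section Prefers.
Variables (n : nat) (dx : 'I_n -> rat) (T : {perm 'I_n}).

Lemma prefers_irr : irreflexive (prefers dx T).
Proof. by move=> y; rewrite /prefers ltxx eqxx ltnn. Qed.

Lemma prefers_trans : transitive (prefers dx T).
Proof.
move=> y x z /orP[lt_xy | /andP[/eqP eq_xy lt_xy]] /orP[lt_yz | /andP[/eqP eq_yz lt_yz]];
  apply/orP.
- by left; exact: lt_trans lt_yz.
- by left; rewrite -eq_yz.
- by left; rewrite eq_xy.
- by right; rewrite eq_xy eq_yz eqxx (ltn_trans lt_xy lt_yz).
Qed.

Lemma prefers_total y y' : y != y' -> prefers dx T y y' || prefers dx T y' y.
Proof.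
rewrite -(inj_eq (@perm_inj _ T)) neq_ltn /prefers.
by case: (ltgtP (dx y) (dx y')).
Qed.

Lemma prefers_le y y' : prefers dx T y y' -> dx y <= dx y'.
Proof. by case/orP=> [/ltW | /andP[/eqP -> _]]. Qed.

End Prefers.

Theorem lemmaA4 (dk : dist_kind) (n k : nat) (am aw : 'I_n -> profile k)
  (Tm Tw : 'I_n -> {perm 'I_n}) :
  (forall m : 'I_n,
     injective (fun w : 'I_n => dMW dk am aw m w) ->
     exists! w : 'I_n, stable_partner dk am aw Tm Tw m w) /\
  (forall w : 'I_n,
     injective (fun m : 'I_n => dMW dk am aw m w) ->
     exists! m : 'I_n, stable_partner dk am aw Tm Tw m w).
Proof.
pose D := dMW dk am aw.
pose pm m := prefers (D m) (Tm m); pose pw w := prefers (D^~ w) (Tw w).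
have pm_irr m : irreflexive (pm m) := prefers_irr _ _.
have pw_irr w : irreflexive (pw w) := prefers_irr _ _.
have pm_trans m : transitive (pm m) := @prefers_trans _ _ _.
have pw_trans w : transitive (pw w) := @prefers_trans _ _ _.
have pm_total m w w' : w != w' -> pm m w w' || pm m w' w := @prefers_total _ _ _ w w'.
have pw_total w m m' : m != m' -> pw w m m' || pw w m' m := @prefers_total _ _ _ m m'.
have pm_le m w w' : pm m w w' -> D m w <= D m w' := @prefers_le _ _ _ w w'.
have pw_le w m m' : pw w m m' -> D m w <= D m' w := @prefers_le _ _ _ m m'.
have [mu mu_stable] : exists mu, stable_matching pm pw mu.
  exact: stable_matching_exists pm_irr pw_irr pm_trans pw_trans pm_total pw_total.
split=> [m D_inj | w D_inj].
- exists (mu m); split=> [|_ [mu' [mu'_stable <-]]]; first by exists mu.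
  exact: (stable_partner_unique pm_irr pm_total pw_total pm_le pw_le
    mu_stable mu'_stable D_inj).
- exists ((mu^-1)%g w); split=> [|m [mu' [mu'_stable mu'_m]]].
    by exists mu; rewrite permKV.
  have := stable_partner_unique pw_irr pw_total pm_total pw_le pm_le
    (stable_matching_inv mu_stable) (stable_matching_inv mu'_stable) D_inj.
  by rewrite -mu'_m permK.
Qed.
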